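(* Let $X\trianglelefteq\widehat X$ be finite groups with natural epimorphism $\epsilon:\widehat X\to\widehat X/X$, and let $g,f,d\in\widehat X$ be such that $\epsilon(g)$ and $\epsilon(d)$ are involutions, $\widehat X/X$ is an abelian $2$-group, and $\widehat X/X=\langle\epsilon(d)\rangle\times\langle\epsilon(f)\rangle\times\langle\epsilon(g)\rangle$. Let $\chi\in\operatorname{Irr}(X)$ be $\widehat X$-invariant and such that some (equivalently every) $\delta\in\operatorname{Irr}(\chi^{\langle X,d\rangle})$ satisfies $\delta^f\ne\delta$. Then exactly one of the following holds: (i) $\chi$ extends to $\langle X,f,dg\rangle$ and does not extend to $\langle X,f,g\rangle$; (ii) $\chi$ extends to $\langle X,f,g\rangle$ and does not extend to $\langle X,f,dg\rangle$.
   Context: $\chi^{\langle X,d\rangle}$ denotes the induced character; $\delta^f(x)=\delta(fxf^{-1})$. *)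

From mathcomp Require Import all_boot all_order all_algebra all_fingroup all_solvable all_field all_character.
Set Implicit Arguments. Unset Strict Implicit. Unset Printing Implicit Defensive.
Import GRing.Theory Num.Theory.

Definition cfextends (gT : finGroupType) (X H : {group gT}) (chi : 'CF(X)) :=
  exists2 psi : 'CF(H), psi \is a character & ('Res[X] psi)%R = chi.

From mathcomp Require Import all_boot all_order all_algebra all_fingroup all_solvable all_field all_character.
Import GRing.Theory Num.Theory.
Set Implicit Arguments. Unset Strict Implicit. Unset Printing Implicit Defensive.

(* Let F = <X, f>.  As chi is f-invariant and F/X is cyclic, chi extends to
   some theta in Irr(F) (Isaacs 11.22).  By Gallagher, every extension of chi to
   F, and every irreducible constituent of chi^<X,d>, is of the form
   (lambda %% X) times a fixed extension, with lambda linear on the abelian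
   group F/X; such lambda %% X is fixed by conjugation in Xh.  So theta^y =
   lambda_y theta for y in Xh, and lambda_g^2 = lambda_d^2 = 1.  A d-invariant
   extension of chi to F would extend further to <F, d> and restrict to an
   f-invariant extension to <X, d>, making every constituent of chi^<X,d>
   f-invariant; hence lambda_d <> 1.  If lambda_g = 1, theta extends to
   <F, g>; otherwise lambda_g = lambda_d, both being the unique character of
   order 2 of the cyclic group F/X, and theta extends to <F, dg>.  Extensions
   to both <F, g> and <F, dg> would restrict to extensions of chi to F
   invariant under g and dg respectively, hence (Gallagher again) to one
   invariant under d. *)

Local Open Scope group_scope.
Local Open Scope ring_scope.

Section CyclicExtension.

Variables (gT : finGroupType) (N G : {group gT}) (x : gT).
Hypotheses (sNG : N \subset G) (nNx : x \in 'N(N)) (sG_Nx : G \subset (N * <[x]>)%g).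

Let n := #[coset N x]%g.

Let xn_in_N : (x ^+ n)%g \in N.
Proof. by apply: coset_idr; rewrite ?groupX // morphX // expg_order. Qed.

Let G_in_Nx z : z \in G -> exists e, (z * (x ^+ e)^-1)%g \in N.
Proof.
by move/(subsetP sG_Nx)=> /mulsgP[y w Ny /cycleP[e ->] ->]; exists e; rewrite mulgK.
Qed.

Section ProjectiveExtension.

Variables (m : nat) (rG : mx_representation algC N m.+1) (P : 'M[algC]_m.+1).
Hypotheses (rG_conjP : forall y, y \in N -> rG (y ^ x^-1)%g *m P = P *m rG y)
           (Pn : P ^+ n = rG (x ^+ n)%g).

Lemma rG_conjXP k y : y \in N -> rG (y ^ (x ^+ k)^-1)%g *m P ^+ k = P ^+ k *m rG y.
Proof.
elim: k y => [|k IHk] y Ny; first by rewrite expg0 invg1 conjg1 expr0 mulmx1 mul1mx.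
rewrite expgS invMg conjgM exprS -mulmxE mulmxA rG_conjP ?memJ_norm ?groupV ?groupX //.
by rewrite -[LHS]mulmxA IHk // mulmxA.
Qed.

(* The e < n with z x^-e in N, unique since n is the order of x modulo N;
   0 when z lies outside N <x>. *)
Definition cyc_exp z :=
  if [pick j : 'I_n | (z * (x ^+ j)^-1)%g \in N] is Some j then val j else 0%N.

(* Well defined on N <x> since P intertwines rG with its x-conjugate and
   P^n = rG(x^n): this is y x^k |-> rG(y) P^k. *)
Definition cyc_ext_mx z := rG (z * (x ^+ cyc_exp z)^-1)%g *m P ^+ cyc_exp z.

Lemma cyc_ext_mxE z e :
  (z * (x ^+ e)^-1)%g \in N -> cyc_ext_mx z = rG (z * (x ^+ e)^-1)%g *m P ^+ e.
Proof.
move=> Nze; have n_gt0 : (0 < n)%N := order_gt0 _.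
set r := (e %% n)%N; have x_e : (x ^+ e = x ^+ (e %/ n * n) * x ^+ r)%g.
  by rewrite -expgD -divn_eq.
have Nxqn : (x ^+ (e %/ n * n))%g \in N by rewrite mulnC expgM groupX.
have ze_zr : (z * (x ^+ r)^-1 = (z * (x ^+ e)^-1) * x ^+ (e %/ n * n))%g.
  by rewrite x_e invMg !mulgA mulgKV.
have Nzr : (z * (x ^+ r)^-1)%g \in N by rewrite ze_zr groupM.
have exp_z : cyc_exp z = r.
  rewrite /cyc_exp; case: pickP => [j Nzj | /(_ (Ordinal (ltn_pmod e n_gt0)))]; last first.
    by rewrite /= Nzr.
  have Nxjr : (x ^+ j * (x ^+ r)^-1)%g \in N.
    have -> : (x ^+ j * (x ^+ r)^-1 = (z * (x ^+ j)^-1)^-1 * (z * (x ^+ r)^-1))%g.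
      by rewrite invMg invgK !mulgA mulgKV.
    by rewrite groupM ?groupV.
  have /eqP : (coset N x ^+ j == coset N x ^+ r)%g.
    by rewrite -!morphX //; apply/eqP/rcoset_kercosetP; rewrite ?groupX ?mem_rcoset.
  by move/eqP; rewrite eq_expg_mod_order -/n modn_mod modn_small // => /eqP.
rewrite /cyc_ext_mx exp_z ze_zr repr_mxM // -mulmxA; congr (_ *m _).
by rewrite [in RHS](divn_eq e n) exprD mulnC exprM Pn -repr_mxX // -expgM mulmxE.
Qed.

Lemma cyc_ext_mx_repr : mx_repr G cyc_ext_mx.
Proof.
split.
  by rewrite (@cyc_ext_mxE 1%g 0) ?expg0 ?invg1 ?mulg1 // repr_mx1 expr0 mulmx1.
move=> z1 z2 /G_in_Nx[e1 N1] /G_in_Nx[e2 N2].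
rewrite (cyc_ext_mxE N1) (cyc_ext_mxE N2).
set y1 := (z1 * _)%g in N1 *; set y2 := (z2 * _)%g in N2 *.
have Ny2' : (y2 ^ (x ^+ e1)^-1)%g \in N by rewrite memJ_norm ?groupV ?groupX.
have z12E : (z1 * z2 * (x ^+ (e1 + e2))^-1 = y1 * y2 ^ (x ^+ e1)^-1)%g.
  by rewrite /y1 /y2 expgD conjgE invgK invMg !mulgA mulgKV.
rewrite (@cyc_ext_mxE _ (e1 + e2)); last by rewrite z12E groupM.
rewrite z12E (repr_mxM rG) // exprD -mulmxE -!mulmxA; congr (_ *m _).
by rewrite !mulmxA rG_conjXP.
Qed.

End ProjectiveExtension.

Lemma cfextends_cycle_invariant (theta : 'CF(N)) :
  theta \in irr N -> (theta ^ x)%CF = theta -> cfextends G theta.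
Proof.
case/irr_reprP=> [[m rG] irr_rG ->] /= theta_x.
case: m rG irr_rG theta_x => [|m] rG irr_rG theta_x.
  by have [] := (mx_irrP _).1 irr_rG.
pose rGx y := rG (y ^ x^-1)%g.
have rGx_repr : mx_repr N rGx.
  split=> [|y z Ny Nz]; first by rewrite /rGx conj1g repr_mx1.
  by rewrite /rGx conjMg repr_mxM ?memJ_norm ?groupV.
have /cfRepr_rsimP[B _ B_free B_conj] : cfRepr (MxRepresentation rGx_repr) == cfRepr rG.
  apply/eqP/cfun_inP=> y Ny.
  by rewrite -theta_x cfConjgE // !cfunE Ny memJ_norm ?groupV // Ny.
have B_unit : B \in unitmx by rewrite -row_free_unit.
pose R := rG (x ^+ n)%g; have R_unit : R \in unitmx := repr_mx_unit rG xn_in_N.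
(* R^-1 B^n commutes with rG, hence is scalar by Schur's lemma. *)
have /is_scalar_mxP[c BnR] : is_scalar_mx (invmx R *m B ^+ n).
  apply: mx_abs_irr_cent_scalar (groupC irr_rG) _ _; apply/centgmxP=> y Ny.
  have NxnV : ((x ^+ n)^-1)%g \in N by rewrite groupV.
  have := rG_conjXP B_conj n Ny; rewrite conjgE invgK !repr_mxM ?groupM //.
  rewrite (repr_mxV rG xn_in_N) -/R => BnE.
  by rewrite -mulmxA -BnE !mulmxA mulVmx // mul1mx.
have BnE : B ^+ n = c *: R.
  by rewrite -mul_mx_scalar -BnR mulmxA mulmxV // mul1mx.
have c_neq0 : c != 0.
  by apply: contraTneq (unitrX n B_unit) => c0; rewrite BnE c0 scale0r unitr0.
pose r := n.-root c; have rn : r ^+ n = c := rootCK (order_gt0 _) c.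
have r_neq0 : r != 0.
  by apply: contraNneq c_neq0 => r0; rewrite -rn r0 expr0n gtn_eqF ?order_gt0.
pose P := r^-1 *: B.
have P_conj y : y \in N -> rG (y ^ x^-1)%g *m P = P *m rG y.
  by move=> Ny; rewrite /P -scalemxAr B_conj // scalemxAl.
have Pn : P ^+ n = rG (x ^+ n)%g.
  by rewrite /P exprZn BnE scalerA exprVn rn mulVf // scale1r.
exists (cfRepr (MxRepresentation (cyc_ext_mx_repr P_conj Pn))); first exact: cfRepr_char.
apply/cfun_inP=> y Ny; rewrite cfResE // !cfunE Ny (subsetP sNG) //=.
by rewrite (@cyc_ext_mxE _ _ _ _ y 0) ?expg0 ?invg1 ?mulg1 // expr0 mulmx1.
Qed.

End CyclicExtension.

Lemma cfextends_trans (gT : finGroupType) (X H K : {group gT}) (chi : 'CF(X)) (th : 'CF(H)) :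
  X \subset H -> H \subset K -> 'Res[X] th = chi -> cfextends K th -> cfextends K chi.
Proof.
by move=> sXH sHK thX [psi Npsi psiH]; exists psi; rewrite // -(cfResRes _ sXH sHK) psiH.
Qed.

Lemma genU1_mul_cycle (gT : finGroupType) (H : {group gT}) x :
  x \in 'N(H) -> <<H :|: [set x]>> = (H * <[x]>)%g.
Proof. by move=> nHx; rewrite -norm_joinEr ?cycle_subG // joing_idr. Qed.

Lemma genU2_genU1 (gT : finGroupType) (A : {set gT}) x y :
  <<A :|: [set x; y]>> = <<<<A :|: [set x]>> :|: [set y]>>.
Proof. by rewrite setUA; symmetry; apply: joing_idl. Qed.

Lemma lin_char_sqr1_cycle_eq (gT : finGroupType) (A : {group gT}) a (phi psi : 'CF(A)) :
  A \subset <[a]> -> a \in A -> phi \is a linear_char -> psi \is a linear_char ->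
  phi * phi = 1 -> psi * psi = 1 -> phi != 1 -> psi != 1 -> phi = psi.
Proof.
move=> sAa Aa.
have at_a_opp1 (xi : 'CF(A)) : xi \is a linear_char -> xi * xi = 1 -> xi != 1 -> xi a = -1.
  move=> lin_xi xi2 xi_neq1; have /eqP : (xi * xi) a = 1 by rewrite xi2 cfun1E Aa.
  rewrite cfunE -expr2 sqrf_eq1 => /orP[/eqP xia1 | /eqP //]; case/eqP: xi_neq1.
  apply/cfun_inP=> w /(subsetP sAa)/cycleP[e ->].
  by rewrite lin_charX // xia1 expr1n cfun1E groupX.
move=> lin_phi lin_psi phi2 psi2 phi_neq1 psi_neq1.
apply/cfun_inP=> w /(subsetP sAa)/cycleP[e ->].
by rewrite !lin_charX // !at_a_opp1.
Qed.

Section Gallagher.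

Variables (gT : finGroupType) (X H : {group gT}) (th : 'CF(H)).
Hypotheses (nsXH : X <| H) (irr_th : th \in irr H) (irr_thX : 'Res[X] th \in irr X).

Lemma constt_Ind_Res_mod_mul i : i \in irr_constt ('Ind[H] ('Res[X] th)) ->
  exists b : Iirr (H / X), 'chi_i = ('chi_b %% X)%CF * th.
Proof.
have [c thE] := irrP irr_th; have [t thXE] := irrP irr_thX.
have cNt : 'Res[X] 'chi_c = 'chi_t by rewrite -thE.
have [irrM _ consttE _] := constt_Ind_ext nsXH cNt.
rewrite thXE consttE => /codomP[b ->]; exists b.
by rewrite thE /mul_mod_Iirr /mul_Iirr cfIirrE ?irrM // mod_IirrE.
Qed.

Lemma irr_Res_eq_mod_mul th' : th' \in irr H -> 'Res[X] th' = 'Res[X] th ->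
  exists b : Iirr (H / X), th' = ('chi_b %% X)%CF * th.
Proof.
case/irrP=> c' -> th'X; apply: constt_Ind_Res_mod_mul.
have [t thXE] := irrP irr_thX.
by rewrite thXE constt_Ind_Res th'X thXE irr_consttE cfnorm_irr oner_eq0.
Qed.

Lemma mod_mul_irr_eq_id b : ('chi_b %% X)%CF * th = th -> b = 0.
Proof.
have [c thE] := irrP irr_th; have [t thXE] := irrP irr_thX.
have cNt : 'Res[X] 'chi_c = 'chi_t by rewrite -thE.
have [_ inj_mul _ _] := constt_Ind_ext nsXH cNt.
move=> bth; apply: inj_mul; rewrite /mul_mod_Iirr /mul_Iirr mod_IirrE // -thE bth.
by rewrite mod_Iirr0 irr0 mul1r thE irrK.
Qed.

End Gallagher.

Lemma cfConjg_Res_id (gT : finGroupType) (F K : {group gT}) (psi : 'CF(K)) y :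
  y \in K -> y \in 'N(F) -> ('Res[F] psi ^ y)%CF = 'Res[F] psi.
Proof. by move=> Ky nFy; rewrite cfConjgRes_norm ?(subsetP (normG K)) // cfConjg_id. Qed.

Lemma coset_order2_mulgg (gT : finGroupType) (X : {group gT}) y :
  y \in 'N(X) -> #[coset X y] = 2 -> (y * y)%g \in X.
Proof.
move=> nXy oy; apply: coset_idr; rewrite ?groupM // morphM //.
by rewrite -(expg_order (coset X y)) oy expgS expg1.
Qed.

Section AbelianQuotient.

Variables (gT : finGroupType) (X Xh : {group gT}).
Hypotheses (nsXXh : X <| Xh) (abQ : abelian (Xh / X)).

Lemma normal_abelian_quotient (H : {group gT}) : X \subset H -> H \subset Xh -> H <| Xh.
Proof.
move=> sXH sHXh; apply: sub_der1_normal sHXh.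
exact: subset_trans (der1_min (normal_norm nsXXh) abQ) sXH.
Qed.

Lemma cfMod_conjg_abelian (H : {group gT}) (phi : 'CF(H / X)) y :
  X \subset H -> H \subset Xh -> y \in Xh -> ((phi %% X) ^ y)%CF = (phi %% X)%CF.
Proof.
move=> sXH sHXh Xh_y; have nXy := subsetP (normal_norm nsXXh) y Xh_y.
have nHy := subsetP (normal_norm (normal_abelian_quotient sXH sHXh)) y Xh_y.
rewrite cfConjgMod_norm // inertiaJ // (subsetP (cent_sub_inertia _)) //.
apply/centP=> _ /morphimP[h _ Hh ->].
by apply: (centsP abQ); rewrite mem_quotient // (subsetP sHXh).
Qed.

End AbelianQuotient.

Section InvariantCharacter.

Variables (gT : finGroupType) (X Xh : {group gT}) (chi : 'CF(X)).
Hypotheses (nsXXh : X <| Xh) (abQ : abelian (Xh / X)) (irr_chi : chi \in irr X)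
  (chi_inv : forall y, y \in Xh -> (chi ^ y)%CF = chi).

Lemma cfRes_ext_irr (F K : {group gT}) (psi : 'CF(K)) :
  X \subset F -> F \subset K -> psi \is a character -> 'Res[X] psi = chi ->
  'Res[F] psi \in irr F /\ 'Res[X] ('Res[F] psi) = chi.
Proof.
move=> sXF sFK Npsi psiX; have resE : 'Res[X] ('Res[F] psi) = chi by rewrite cfResRes.
by split=> //; apply: (cfRes_irr_irr (H := X) (cfRes_char _ Npsi)); rewrite resE.
Qed.

Section Extension.

Variables (H : {group gT}) (th : 'CF(H)).
Hypotheses (sXH : X \subset H) (sHXh : H \subset Xh).
Hypotheses (irr_th : th \in irr H) (thX : 'Res[X] th = chi).

Let nsHXh : H <| Xh := normal_abelian_quotient nsXXh abQ sXH sHXh.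
Let nsXH : X <| H := normalS sXH sHXh nsXXh.
Let irr_thX : 'Res[X] th \in irr X. Proof. by rewrite thX. Qed.

Lemma mod_mul_conjg_id (phi : 'CF(H / X)) y : y \in Xh -> (th ^ y)%CF = th ->
  (((phi %% X)%CF * th) ^ y)%CF = (phi %% X)%CF * th.
Proof. by move=> Xh_y th_y; rewrite rmorphM /= (cfMod_conjg_abelian nsXXh abQ) // th_y. Qed.

Lemma ext_conjg_mod_mul y : y \in Xh ->
  exists b : Iirr (H / X), (th ^ y)%CF = ('chi_b %% X)%CF * th.
Proof.
move=> Xh_y; apply: (irr_Res_eq_mod_mul nsXH irr_th irr_thX); first exact: cfConjg_irr.
rewrite -cfConjgRes_norm ?(subsetP (normal_norm nsXXh)) //.
  by rewrite thX chi_inv.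
exact: subsetP (normal_norm nsHXh) y Xh_y.
Qed.

Lemma mod_mul_conjgM (phi psi : 'CF(H / X)) y z : y \in Xh -> z \in Xh ->
    (th ^ y)%CF = (phi %% X)%CF * th -> (th ^ z)%CF = (psi %% X)%CF * th ->
  (th ^ (y * z))%CF = ((phi * psi) %% X)%CF * th.
Proof.
move=> Xh_y Xh_z th_y th_z.
rewrite (cfConjgM _ nsHXh) // th_y rmorphM /= (cfMod_conjg_abelian nsXXh abQ) //.
by rewrite th_z mulrA rmorphM.
Qed.

Lemma mod_mul_conjg_sqr b y : y \in Xh -> (y * y)%g \in X ->
  (th ^ y)%CF = ('chi_b %% X)%CF * th -> 'chi_b * 'chi_b = 1.
Proof.
move=> Xh_y Xyy th_y.
have abHX : abelian (H / X) := abelianS (quotientS X sHXh) abQ.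
have lin_b2 : 'chi_b * 'chi_b \is a linear_char by rewrite rpredM //; apply/char_abelianP.
have b2E : 'chi_(cfIirr ('chi_b * 'chi_b)) = 'chi_b * 'chi_b.
  exact: cfIirrE (lin_char_irr lin_b2).
have := mod_mul_conjgM Xh_y Xh_y th_y th_y.
rewrite cfConjg_id ?(subsetP sXH) // -b2E => /esym/(mod_mul_irr_eq_id nsXH irr_th irr_thX).
by rewrite -b2E => ->; rewrite irr0.
Qed.

Lemma ext_conjg_id_indep th' y : th' \in irr H -> 'Res[X] th' = chi -> y \in Xh ->
  (th ^ y)%CF = th -> (th' ^ y)%CF = th'.
Proof.
move=> irr_th' th'X Xh_y th_y.
have [b ->] := irr_Res_eq_mod_mul nsXH irr_th irr_thX irr_th' (etrans th'X (esym thX)).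
exact: mod_mul_conjg_id.
Qed.

Lemma constt_Ind_conjg_id i y : y \in Xh -> (th ^ y)%CF = th ->
  i \in irr_constt ('Ind[H] chi) -> ('chi_i ^ y)%CF = 'chi_i.
Proof.
move=> Xh_y th_y; rewrite -thX => /(constt_Ind_Res_mod_mul nsXH irr_th irr_thX)[b ->].
exact: mod_mul_conjg_id.
Qed.

Lemma cfextends_conjg_id y : y \in Xh -> (th ^ y)%CF = th ->
  cfextends <<H :|: [set y]>>%G chi.
Proof.
move=> Xh_y th_y; have nHy := subsetP (normal_norm nsHXh) y Xh_y.
have sHK : H \subset <<H :|: [set y]>> := sub_gen (subsetUl _ _).
apply: (cfextends_trans sXH sHK thX).
apply: (cfextends_cycle_invariant sHK nHy _ irr_th th_y).
by rewrite -(genU1_mul_cycle nHy).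
Qed.

End Extension.

Section ExtensionsOfF.

Variables (d f g : gT).
Hypotheses (Xh_d : d \in Xh) (Xh_f : f \in Xh) (Xh_g : g \in Xh).
Hypotheses (Xdd : (d * d)%g \in X) (Xgg : (g * g)%g \in X).
Hypothesis moved_constt : exists2 i : Iirr <<X :|: [set d]>>,
  i \in irr_constt ('Ind[<<X :|: [set d]>>] chi) & ('chi_i ^ f)%CF != 'chi_i.

Local Notation F := <<X :|: [set f]>>%G.

Let sXF : X \subset F. Proof. exact: sub_gen (subsetUl _ _). Qed.
Let sFXh : F \subset Xh. Proof. by rewrite gen_subG subUset normal_sub // sub1set. Qed.
Let Ff : f \in F. Proof. by rewrite mem_gen // !inE eqxx orbT. Qed.
Let nsFXh : F <| Xh := normal_abelian_quotient nsXXh abQ sXF sFXh.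

Lemma no_ext_conjg_id th : th \in irr F -> 'Res[X] th = chi -> (th ^ d)%CF != th.
Proof.
move=> irr_th thX; apply/negP=> /eqP th_d.
have [psi Npsi psiX] := cfextends_conjg_id sXF sFXh irr_th thX Xh_d th_d.
set D := <<X :|: [set d]>>%G.
have sXD : X \subset D := sub_gen (subsetUl _ _).
have sDXh : D \subset Xh by rewrite gen_subG subUset normal_sub // sub1set.
have sDL : D \subset <<F :|: [set d]>> by apply: genS; rewrite setSU.
have [irr_dl dlX] := cfRes_ext_irr sXD sDL Npsi psiX.
have dl_f : ('Res[D] psi ^ f)%CF = 'Res[D] psi.
  apply: cfConjg_Res_id; first by rewrite mem_gen // inE Ff.
  exact: subsetP (normal_norm (normal_abelian_quotient nsXXh abQ sXD sDXh)) f Xh_f.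
have [i consti] := moved_constt; apply/negP; rewrite negbK; apply/eqP.
exact: (constt_Ind_conjg_id sXD sDXh irr_dl dlX Xh_f dl_f).
Qed.

Lemma not_cfextends_both :
  cfextends <<X :|: [set f; g]>>%G chi -> ~ cfextends <<X :|: [set f; (d * g)%g]>>%G chi.
Proof.
have sFK y : F \subset <<X :|: [set f; y]>> by apply: genS; rewrite setUS ?subsetUl.
have Ky y : y \in <<X :|: [set f; y]>> by rewrite mem_gen // !inE eqxx !orbT.
have nFXh := subsetP (normal_norm nsFXh).
move=> [p1 Np1 p1X] [p2 Np2 p2X].
have [irr_t1 t1X] := cfRes_ext_irr sXF (sFK g) Np1 p1X.
have [irr_t2 t2X] := cfRes_ext_irr sXF (sFK _) Np2 p2X.
have Xh_dg := groupM Xh_d Xh_g.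
have t2_g : ('Res[F] p2 ^ g)%CF = 'Res[F] p2.
  apply: (ext_conjg_id_indep sXF sFXh irr_t1 t1X irr_t2 t2X Xh_g).
  exact: cfConjg_Res_id (Ky g) (nFXh g Xh_g).
have t2_dg : ('Res[F] p2 ^ (d * g))%CF = 'Res[F] p2.
  exact: cfConjg_Res_id (Ky _) (nFXh _ Xh_dg).
case/eqP: (no_ext_conjg_id irr_t2 t2X).
by move: t2_dg; rewrite (cfConjgM _ nsFXh) // -{2}t2_g => /(can_inj (cfConjgK g)).
Qed.

Lemma cfextends_fg_or_fdg :
  cfextends <<X :|: [set f; g]>>%G chi \/ cfextends <<X :|: [set f; (d * g)%g]>>%G chi.
Proof.
have nXf := subsetP (normal_norm nsXXh) f Xh_f.
have [th Nth thX] : cfextends F chi.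
  apply: (cfextends_cycle_invariant sXF nXf _ irr_chi (chi_inv Xh_f)).
  by rewrite -(genU1_mul_cycle nXf).
have irr_th : th \in irr F by apply: (cfRes_irr_irr (H := X) Nth); rewrite thX.
have KE y : <<X :|: [set f; y]>>%G = <<F :|: [set y]>>%G.
  by apply: val_inj; apply: genU2_genU1.
rewrite !KE.
have [bg th_g] := ext_conjg_mod_mul sXF sFXh irr_th thX Xh_g.
have [bd th_d] := ext_conjg_mod_mul sXF sFXh irr_th thX Xh_d.
have [bg0 | bg_neq0] := eqVneq bg 0.
  left; apply: (cfextends_conjg_id sXF sFXh irr_th thX Xh_g).
  by rewrite th_g bg0 irr0 rmorph1 mul1r.
right; apply: (cfextends_conjg_id sXF sFXh irr_th thX (groupM Xh_d Xh_g)).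
have bd_neq0 : bd != 0.
  apply: contraNneq (no_ext_conjg_id irr_th thX) => bd0.
  by rewrite th_d bd0 irr0 rmorph1 mul1r.
have cycFX : (F / X)%g \subset <[coset X f]>.
  by rewrite /= genU1_mul_cycle // quotientMidl quotient_cycle.
have abFX : abelian (F / X)%g := abelianS (quotientS X sFXh) abQ.
have bdg : 'chi_bd = 'chi_bg.
  apply: (lin_char_sqr1_cycle_eq cycFX (mem_quotient X Ff)); rewrite ?irr_eq1 //.
  - exact/char_abelianP.
  - exact/char_abelianP.
  - exact: (mod_mul_conjg_sqr sXF sFXh irr_th thX Xh_d Xdd th_d).
  - exact: (mod_mul_conjg_sqr sXF sFXh irr_th thX Xh_g Xgg th_g).
rewrite (mod_mul_conjgM sXF sFXh Xh_d Xh_g th_d th_g) bdg.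
by rewrite (mod_mul_conjg_sqr sXF sFXh irr_th thX Xh_g Xgg th_g) rmorph1 mul1r.
Qed.

End ExtensionsOfF.

End InvariantCharacter.

Theorem lemma6p1 (gT : finGroupType) (X Xh : {group gT}) (g f d : gT)
  (chi : 'CF(X)) :
  (X <| Xh)%g -> g \in Xh -> f \in Xh -> d \in Xh ->
  #[coset X g]%g = 2%N -> #[coset X d]%g = 2%N ->
  abelian (Xh / X)%g -> (2.-group (Xh / X))%g ->
  (<[coset X d]> \x <[coset X f]> \x <[coset X g]>)%g = (Xh / X)%g ->
  chi \in irr X ->
  (forall y, y \in Xh -> (chi ^ y)%CF = chi) ->
  (exists2 i : Iirr <<X :|: [set d]>>,
      i \in irr_constt (('Ind[<<X :|: [set d]>>] chi)%R) & (('chi_i)%R ^ f)%CF != ('chi_i)%R) ->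
  (cfextends <<X :|: [set f; (d * g)%g]>>%G chi /\ ~ cfextends <<X :|: [set f; g]>>%G chi)
  \/
  (cfextends <<X :|: [set f; g]>>%G chi /\ ~ cfextends <<X :|: [set f; (d * g)%g]>>%G chi).
Proof.
move=> nsXXh Xh_g Xh_f Xh_d og od abQ _ _ irr_chi chi_inv moved_constt.
have nXXh := subsetP (normal_norm nsXXh).
have Xgg := coset_order2_mulgg (nXXh g Xh_g) og.
have Xdd := coset_order2_mulgg (nXXh d Xh_d) od.
have not_both := not_cfextends_both nsXXh abQ irr_chi Xh_d Xh_f Xh_g moved_constt.
have [ext_fg | ext_fdg] :=
  cfextends_fg_or_fdg nsXXh abQ irr_chi chi_inv Xh_d Xh_f Xh_g Xdd Xgg moved_constt.
- by right; split=> // /(not_both ext_fg).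
- by left; split=> // /not_both; apply.
Qed.
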